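(* Let $d,N$ be positive integers, $P=(0,N)^d\cap\mathbb{Z}^d$, $\alpha\ge1$, and let $O\subseteq(0,N)^d$ be an open $\alpha$-fat set with $O\cap P\ne\emptyset$. Then $n_{\ell(O)}(O)\le(4\alpha+1)^d$.
   Context: A $d$-cube is an axis-parallel hypercube; width = side length. In-width of $O$: supremum of widths of $d$-cubes contained in $O$; out-width: infimum of widths of $d$-cubes containing $O$; $O$ is $\alpha$-fat if out-width$(O)\le\alpha\cdot$in-width$(O)$. For a positive integer $i$, $\ell(i)$ is the largest $k\ge0$ with $2^k\mid i$; for $x\in P$, $\ell(x)=\min_i\ell(x_i)$; $\ell(O)=\max\{\ell(x):x\in O\cap P\}$. For an integer $l$, $n_l(O)$ is the number of points of $O\cap P$ of level exactly $l$. *)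

From HB Require Import structures.
From mathcomp Require Import all_boot all_order all_algebra.
From mathcomp Require Import all_classical all_reals all_analysis.
Set Implicit Arguments. Unset Strict Implicit. Unset Printing Implicit Defensive.
Import Order.TTheory GRing.Theory Num.Theory.
Import numFieldNormedType.Exports.
Local Open Scope classical_set_scope.
Local Open Scope ring_scope.

Section Defs.
Variables (R : realType) (d : nat).

Definition cube (a : 'rV[R]_d) (w : R) : set 'rV[R]_d :=
  [set x | forall i, a ord0 i <= x ord0 i <= a ord0 i + w].

Definition in_width (O : set 'rV[R]_d) : \bar R :=
  ereal_sup [set w%:E | w in [set w : R | 0 <= w /\ exists a, cube a w `<=` O]].

Definition out_width (O : set 'rV[R]_d) : \bar R :=
  ereal_inf [set w%:E | w in [set w : R | 0 <= w /\ exists a, O `<=` cube a w]].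

Definition fat (alpha : R) (O : set 'rV[R]_d) : Prop :=
  (out_width O <= alpha%:E * in_width O)%E.

Variable N : nat.

(* candidate lattice points: coordinates in {0,..,N-1}; P = those with all
   coordinates positive *)
Definition ptR (p : {ffun 'I_d -> 'I_N}) : 'rV[R]_d := \row_i ((p i : nat)%:R).

Definition inP (p : {ffun 'I_d -> 'I_N}) : bool := [forall i, (0 < p i)%N].

(* l(i) = 2-adic valuation; l(x) = min_i l(x_i).  The neutral element N of the
   iterated min is irrelevant when d > 0, since logn 2 (p i) < N. *)
Definition lvl_pt (p : {ffun 'I_d -> 'I_N}) : nat :=
  \big[minn/N]_(i < d) logn 2 (p i).

Definition PinO (O : set 'rV[R]_d) : {set {ffun 'I_d -> 'I_N}} :=
  [set p | inP p && `[< O (ptR p) >]].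

Definition lvl_set (O : set 'rV[R]_d) : nat := \max_(p in PinO O) lvl_pt p.

Definition n_lvl (O : set 'rV[R]_d) (l : nat) : nat :=
  #|[set p in PinO O | lvl_pt p == l]|.

End Defs.

From HB Require Import structures.
From mathcomp Require Import all_boot all_order all_algebra.
From mathcomp Require Import all_classical all_reals all_analysis.
From mathcomp Require Import lra.
Import Order.TTheory GRing.Theory Num.Theory.
Import numFieldNormedType.Exports.
Local Open Scope classical_set_scope.
Local Open Scope ring_scope.
Set Implicit Arguments. Unset Strict Implicit. Unset Printing Implicit Defensive.

(* Let L = l(O) and M = 2^L.  A cube of width >= 2M inside O contains a point
   of P whose coordinates are all multiples of 2M, i.e. a point of level > L;
   so every cube inside O has width < 2M and, by fatness, O lies in a cube of
   width w < 4 alpha M.  Every point of level L in O has coordinates that are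
   multiples of M in an interval of length w, which leaves at most
   w / M + 1 <= 4 alpha + 1 choices per coordinate. *)

Section Levels.
Variables (d N : nat).
Implicit Type p : {ffun 'I_d -> 'I_N}.

Lemma lvl_pt_le_logn p i : (lvl_pt p <= logn 2 (p i))%N.
Proof. by rewrite /lvl_pt -minEnat; exact: (@bigmin_le _ nat _ N i). Qed.

Lemma dvdn_lvl_pt p i : inP p -> (2 ^ lvl_pt p %| p i)%N.
Proof. by move/forallP/(_ i) => pi_gt0; rewrite pfactor_dvdn // lvl_pt_le_logn. Qed.

Lemma lvl_pt_ge p k :
  inP p -> (k <= N)%N -> (forall i, 2 ^ k %| p i)%N -> (k <= lvl_pt p)%N.
Proof.
move=> /forallP p_gt0 kN dvd_p; rewrite /lvl_pt -minEnat.
by apply: (@le_bigmin _ nat) => // i _; rewrite leEnat -pfactor_dvdn.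
Qed.

Lemma lvl_pt_lt p : (0 < d)%N -> inP p -> (lvl_pt p < N)%N.
Proof.
move=> d_gt0 /forallP p_gt0; pose i := Ordinal d_gt0.
apply: leq_ltn_trans (lvl_pt_le_logn p i) _.
exact: ltn_trans (ltn_logl 2 (p_gt0 i)) (ltn_ord (p i)).
Qed.

Variable R : realType.
Implicit Type O : set 'rV[R]_d.

Lemma lvl_pt_le_lvl_set O p : p \in PinO N O -> (lvl_pt p <= lvl_set N O)%N.
Proof. exact: leq_bigmax_cond. Qed.

Lemma lvl_set_lt O : (0 < d)%N -> (0 < #|PinO N O|)%N -> (lvl_set N O < N)%N.
Proof.
rewrite /lvl_set => d_gt0 /(eq_bigmax_cond (@lvl_pt d N))[p]; rewrite inE => /andP[Pp _] ->.
exact: lvl_pt_lt.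
Qed.

End Levels.

Lemma in_width_le (R : realType) d (O : set 'rV[R]_d) (b : R) :
  (forall a w, 0 <= w -> cube a w `<=` O -> w <= b) -> (in_width O <= b%:E)%E.
Proof.
by move=> le_b; apply: ge_ereal_sup => _ [w [w_ge0 [a cube_sub]] <-]; exact: le_b cube_sub.
Qed.

Lemma out_width_lt (R : realType) d (O : set 'rV[R]_d) (b : R) :
  (out_width O < b%:E)%E -> exists a w, [/\ 0 <= w, O `<=` cube a w & w < b].
Proof.
by case/ereal_inf_lt => _ [w [w_ge0 [a sub_cube]] <-]; rewrite lte_fin; exists a, w.
Qed.

Lemma fat_sub_cube (R : realType) d (O : set 'rV[R]_d) alpha m b :
  0 <= alpha -> fat alpha O -> (in_width O <= m%:E)%E -> alpha * m < b ->
  exists a w, [/\ 0 <= w, O `<=` cube a w & w < b].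
Proof.
move=> alpha_ge0 fatO in_le lt_b; apply: out_width_lt.
apply: le_lt_trans fatO _; apply: le_lt_trans (lee_wpmul2l _ in_le) _.
  by rewrite lee_fin.
by rewrite -EFinM lte_fin.
Qed.

Lemma exists_multiple_in_itv (R : realType) (a w : R) (m : nat) :
  0 <= a -> (0 < m)%N -> m%:R <= w ->
  exists2 k : nat, (0 < k)%N && (m %| k)%N & a < k%:R <= a + w.
Proof.
move=> a_ge0 m_gt0 m_le_w; have mR_gt0 : (0 : R) < m%:R by rewrite ltr0n.
exists ((Num.truncn (a / m%:R)).+1 * m)%N; first by rewrite muln_gt0 m_gt0 dvdn_mull.
have /andP[lb ub] := truncn_itv (divr_ge0 a_ge0 (ltW mR_gt0)).
have a_eq : a = a / m%:R * m%:R by rewrite divfK // gt_eqF.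
rewrite natrM; apply/andP; split; first by rewrite {1}a_eq ltr_pM2r.
apply: (le_trans (y := a + m%:R)); last by rewrite lerD2l.
by rewrite -natr1 mulrDl mul1r lerD2r {2}a_eq ler_pM2r.
Qed.

Lemma uniq_size_le_itv_length (R : realType) (s : seq nat) (b t : R) :
  uniq s -> 0 <= t -> (forall x, x \in s -> b <= x%:R <= b + t) ->
  (size s)%:R <= t + 1.
Proof.
case: s => [|x0 s] s_uniq t_ge0 s_itv; first by rewrite ler_wpDl.
have [m m_in m_min] := ex_minnP (ex_intro (fun n => n \in x0 :: s) x0 (mem_head _ _)).
have s_sub : {subset x0 :: s <= iota m (Num.truncn t).+1}.
  move=> x x_in; have m_le_x := m_min _ x_in.
  rewrite mem_iota m_le_x -(subnKC m_le_x) ltn_add2l ltnS truncn_ge_nat //.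
  have := s_itv _ x_in; have := s_itv _ m_in; rewrite natrB //; lra.
apply: (le_trans (y := (Num.truncn t).+1%:R)).
  by rewrite ler_nat -[X in (_ <= X)%N](size_iota m); exact: uniq_leq_size.
by rewrite -natr1 lerD2r truncn_le.
Qed.

Lemma card_multiples_in_itv (R : realType) n (m : nat) (a w : R) :
  (0 < m)%N -> 0 <= w ->
  #|[pred k : 'I_n | (m %| k)%N && (a <= (k : nat)%:R <= a + w)]|%:R
    <= w / m%:R + 1.
Proof.
move=> m_gt0 w_ge0; have mR_gt0 : (0 : R) < m%:R by rewrite ltr0n.
rewrite cardE -(size_map (fun k : 'I_n => k %/ m)%N).
apply: (uniq_size_le_itv_length (b := a / m%:R)); last 2 first.
- by rewrite divr_ge0 // ltW.
- move=> x /mapP[k]; rewrite mem_enum => /andP[m_dvd k_itv] ->.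
  have -> : ((k %/ m)%N%:R : R) = (k : nat)%:R / m%:R.
    by rewrite -{2}(divnK m_dvd) natrM mulfK // gt_eqF.
  by rewrite -mulrDl !ler_pM2r ?invr_gt0.
rewrite map_inj_in_uniq ?enum_uniq // => k1 k2.
rewrite !mem_enum => /andP[dvd1 _] /andP[dvd2 _] eq_div.
by apply: val_inj; rewrite /= -(divnK dvd1) -(divnK dvd2) eq_div.
Qed.

Lemma card_family_le (R : numDomainType) (aT rT : finType) (F : aT -> pred rT) (c : R) :
  (forall x, #|F x|%:R <= c) -> #|family F|%:R <= c ^+ #|aT|.
Proof.
move=> F_le; rewrite card_family foldrE big_map big_enum natr_prod -prodr_const.
by apply: ler_prod => x _; rewrite ler0n F_le.
Qed.

Lemma n_lvl_le (R : realType) d N (O : set 'rV[R]_d) l a w :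
  0 <= w -> O `<=` cube a w -> (n_lvl N O l)%:R <= (w / (2 ^ l)%:R + 1) ^+ d.
Proof.
move=> w_ge0 O_sub.
pose grid i :=
  [pred k : 'I_N | (2 ^ l %| k)%N && (a ord0 i <= (k : nat)%:R <= a ord0 i + w)].
have sub_grid : [set p in PinO N O | lvl_pt p == l] \subset family grid.
  apply/fintype.subsetP => p; rewrite !inE => /andP[/andP[Pp /asboolP Op] /eqP p_lvl].
  apply/familyP => i; rewrite inE -p_lvl dvdn_lvl_pt //=.
  by have := O_sub _ Op i; rewrite mxE.
rewrite /n_lvl -[X in _ <= _ ^+ X]card_ord.
apply: (le_trans _ (card_family_le (F := grid) _)); first by rewrite ler_nat subset_leq_card.
by move=> i; apply: card_multiples_in_itv; rewrite ?expn_gt0.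
Qed.

Section FatSet.
Variables (R : realType) (d N : nat) (O : set 'rV[R]_d).
Hypothesis d_gt0 : (0 < d)%N.
Hypothesis O_box : O `<=` [set x | forall i, 0 < x ord0 i < N%:R].
Hypothesis PinO_gt0 : (0 < #|PinO N O|)%N.

Lemma cube_sub_width_lt a w :
  0 <= w -> cube a w `<=` O -> w < (2 ^ (lvl_set N O).+1)%:R.
Proof.
move=> w_ge0 cube_sub; rewrite ltNge; apply/negP => big_w.
have a_in : cube a w a by move=> i; rewrite lexx lerDl.
have a_ge0 i : 0 <= a ord0 i by have /andP[/ltW] := O_box (cube_sub _ a_in) i.
have pow_gt0 : (0 < 2 ^ (lvl_set N O).+1)%N by rewrite expn_gt0.
have /fin_all_exists2[k k_mult k_itv] i := exists_multiple_in_itv (a_ge0 i) pow_gt0 big_w.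
pose x : 'rV[R]_d := \row_i (k i)%:R.
have Ox : O x by apply: cube_sub => i; rewrite mxE; have /andP[/ltW -> ->] := k_itv i.
have k_lt i : (k i < N)%N by have /andP[_] := O_box Ox i; rewrite mxE ltr_nat.
pose q : {ffun 'I_d -> 'I_N} := [ffun i => Ordinal (k_lt i)].
have Pq : inP q by apply/forallP => i; rewrite ffunE; case/andP: (k_mult i).
have q_in : q \in PinO N O.
  by rewrite inE Pq; apply/asboolP; congr O: Ox; apply/rowP => i; rewrite !mxE ffunE.
have := lvl_pt_le_lvl_set q_in; apply/negP; rewrite -ltnNge.
apply: lvl_pt_ge => // [|i]; first exact: lvl_set_lt.
by rewrite ffunE; case/andP: (k_mult i).
Qed.

Lemma in_width_le_lvl_set : (in_width O <= (2 ^ (lvl_set N O).+1)%:R%:E)%E.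
Proof. by apply: in_width_le => a w w_ge0 /(cube_sub_width_lt w_ge0)/ltW. Qed.

End FatSet.

Theorem corollary2 (R : realType) (d N : nat) (hd : (0 < d)%N) (hN : (0 < N)%N)
  (alpha : R) (O : set 'rV[R]_d) :
  1 <= alpha ->
  open O ->
  O `<=` [set x | forall i, 0 < x ord0 i < N%:R] ->
  fat alpha O ->
  (0 < #|PinO N O|)%N ->
  (n_lvl N O (lvl_set N O))%:R <= (4 * alpha + 1) ^+ d.
Proof.
move=> alpha_ge1 _ O_box fatO PinO_gt0.
have alpha_gt0 : 0 < alpha := lt_le_trans ltr01 alpha_ge1.
have := in_width_le_lvl_set hd O_box PinO_gt0; rewrite expnS natrM.
have := @n_lvl_le R d N O (lvl_set N O).
have : (0 : R) < (2 ^ lvl_set N O)%:R by rewrite ltr0n expn_gt0.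
(* Abstracting 2^l(O) keeps lra from trying to evaluate it. *)
move: (2 ^ lvl_set N O)%:R => M M_gt0 n_lvl_le_M in_le.
have [|a [w [w_ge0 O_sub w_lt]]] :=
  fat_sub_cube (b := 4 * alpha * M) (ltW alpha_gt0) fatO in_le.
  by have := mulr_gt0 alpha_gt0 M_gt0; lra.
apply: le_trans (n_lvl_le_M _ _ w_ge0 O_sub) _.
apply: lerXn2r; rewrite ?nnegrE.
- by rewrite addr_ge0 // divr_ge0 // ltW.
- lra.
- by rewrite lerD2r ler_pdivrMr // ltW.
Qed.
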